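(* Under the standing setup, let $Y_1,Y_2$ be two nonnegative measurable income functions with $Y_1\le Y_2$ pointwise (so the income processes satisfy $Y_{1t}\le Y_{2t}$ for all $t$), and suppose Assumptions 1 and 2 hold for each of them. Let $c_1^*,c_2^*$ be the corresponding optimal consumption functions. Then $c_1^*(w,z)\le c_2^*(w,z)$ for all $(w,z)\in S_0$.
   Context: Standing setup. $\mathsf Z$ finite, $\{Z_t\}$ a time-homogeneous Markov chain on $\mathsf Z$ with transition probabilities $P(z,\hat z)$; $\{\epsilon_t\}_{t\ge1}$ i.i.d. with distribution $\pi$, independent of $\{Z_t\}$; for nonnegative measurable $\beta,R,Y$, $\beta_t=\beta(Z_{t-1},Z_t,\epsilon_t)$, $R_t=R(Z_{t-1},Z_t,\epsilon_t)$, $Y_t=Y(Z_{t-1},Z_t,\epsilon_t)$. $u:(0,\infty)\times\mathsf Z\to\mathbb R$ with derivative $u'(c,z)$ in $c$. $\mathbb E_z$: expectation given $Z_0=z$; under $\mathbb E_z$, $\hat Z=Z_1$, $\hat\beta=\beta(z,\hat Z,\epsilon_1)$, $\hat R=R(z,\hat Z,\epsilon_1)$, $\hat Y=Y(z,\hat Z,\epsilon_1)$. $S_0=(0,\infty)\times\mathsf Z$. Assumption 1: for every $z$, $u(\cdot,z)$ twice differentiable on $(0,\infty)$, $u'>0$, $u''<0$, $u'(c,z)\to\infty$ as $c\to0$, $\lim_{c\to\infty}u'(c,z)<1$. Assumption 2: (a) $\mathbb E_zu'(\hat Y,\hat Z)<\infty$ and $\mathbb E_z\hat\beta\hat Ru'(\hat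 Y,\hat Z)<\infty$ for all $z$; (b) $r(K(1))<1$ ($r$ = spectral radius), where $K_{z\hat z}(\theta)=P(z,\hat z)\int\beta(z,\hat z,\epsilon)R(z,\hat z,\epsilon)^\theta\pi(d\epsilon)$. $\mathcal C$: continuous $c:S_0\to\mathbb R_+$, increasing in $w$, $0<c(w,z)\le w$, with $\sup_{S_0}|u'(c(w,z),z)-u'(w,z)|<\infty$. $T$: $Tc(w,z)$ is the unique $\xi\in(0,w]$ with $u'(\xi,z)=\max\{\mathbb E_z\hat\beta\hat Ru'(c(\hat R(w-\xi)+\hat Y,\hat Z),\hat Z),u'(w,z)\}$. The optimal consumption function $c^*$ is the unique fixed point of $T$ in $\mathcal C$ (for the given income process). *)

From HB Require Import structures.
From mathcomp Require Import all_boot all_order all_algebra.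
From mathcomp Require Import complex.
From mathcomp Require Import all_classical all_reals all_analysis.

Set Implicit Arguments.
Unset Strict Implicit.
Unset Printing Implicit Defensive.

Import Order.TTheory GRing.Theory Num.Theory.
Import numFieldNormedType.Exports.
Local Open Scope classical_set_scope.
Local Open Scope ring_scope.

Section Defs.
Variable R : realType.

Definition spectral_radius (n : nat) (A : 'M[R]_n) : R :=
  sup [set complex.Re `|l| | l in
        [set l : R[i] | eigenvalue (map_mx (real_complex R) A) l]].

Variable Z : finType.

Definition stochastic (P : Z -> Z -> R) : Prop :=
  (forall z zh, 0 <= P z zh) /\ (forall z, \sum_(zh : Z) P z zh = 1).

Definition up (u : R -> Z -> R) (c : R) (z : Z) : R :=
  derive1 (fun x => u x z) c.

Definition upp (u : R -> Z -> R) (c : R) (z : Z) : R :=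
  derive1 (fun x => up u x z) c.

Definition upE (u : R -> Z -> R) (c : R) (z : Z) : \bar R :=
  if 0 < c then (up u c z)%:E else +oo%E.

Variables (d : measure_display) (E : measurableType d).

(* E_z f(Zhat, eps_1) = sum_zh P(z,zh) \int f(zh, eps) pi(d eps) *)
Definition Ez (P : Z -> Z -> R) (pi : probability E R) (z : Z)
  (f : Z -> E -> \bar R) : \bar R :=
  (\sum_(zh : Z) (P z zh)%:E * \int[pi]_e f zh e)%E.

Definition Assumption1 (u : R -> Z -> R) : Prop :=
  forall z,
    (forall c, 0 < c -> derivable (fun x => u x z) c 1 /\
                        derivable (fun x => up u x z) c 1) /\
    (forall c, 0 < c -> 0 < up u c z) /\
    (forall c, 0 < c -> upp u c z < 0) /\
    ((fun c => up u c z) @ 0^'+ --> +oo) /\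
    (exists L : R, L < 1 /\ (fun c => up u c z) @ +oo --> L).

Definition K1E (P : Z -> Z -> R) (pi : probability E R)
  (beta Rr : Z -> Z -> E -> R) (z zh : Z) : \bar R :=
  ((P z zh)%:E * \int[pi]_e (beta z zh e * Rr z zh e)%:E)%E.

Definition K1 (P : Z -> Z -> R) (pi : probability E R)
  (beta Rr : Z -> Z -> E -> R) : 'M[R]_#|Z| :=
  \matrix_(i, j) fine (K1E P pi beta Rr (enum_val i) (enum_val j)).

Definition Assumption2 (P : Z -> Z -> R) (pi : probability E R)
  (beta Rr Y : Z -> Z -> E -> R) (u : R -> Z -> R) : Prop :=
  (forall z, (Ez P pi z (fun zh e => upE u (Y z zh e) zh) < +oo)%E) /\
  (forall z, (Ez P pi z (fun zh e =>
       (beta z zh e * Rr z zh e)%:E * upE u (Y z zh e) zh) < +oo)%E) /\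
  (forall z zh, (K1E P pi beta Rr z zh < +oo)%E) /\
  spectral_radius (K1 P pi beta Rr) < 1.

Definition inC (u : R -> Z -> R) (c : R -> Z -> R) : Prop :=
  (forall z, {within [set w : R | 0 < w], continuous (fun w => c w z)}) /\
  (forall z w1 w2, 0 < w1 -> w1 <= w2 -> c w1 z <= c w2 z) /\
  (forall z w, 0 < w -> 0 < c w z <= w) /\
  (exists M : R, forall z w, 0 < w -> `|up u (c w z) z - up u w z| <= M).

(* T_rel c w z xi : xi in (0,w] solves
   u'(xi,z) = max { E_z beta R u'(c(R(w-xi)+Y, Zhat), Zhat), u'(w,z) },
   i.e. xi = Tc(w,z). *)
Definition T_rel (P : Z -> Z -> R) (pi : probability E R)
  (beta Rr Y : Z -> Z -> E -> R) (u : R -> Z -> R) (c : R -> Z -> R)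
  (w : R) (z : Z) (xi : R) : Prop :=
  0 < xi <= w /\
  (up u xi z)%:E =
    maxe (Ez P pi z (fun zh e =>
            let a := Rr z zh e * (w - xi) + Y z zh e in
            ((beta z zh e * Rr z zh e)%:E *
             (if (0 < a)%R then upE u (c a zh) zh else +oo))%E))
         (up u w z)%:E.

Definition T_fixed (P : Z -> Z -> R) (pi : probability E R)
  (beta Rr Y : Z -> Z -> E -> R) (u : R -> Z -> R) (c : R -> Z -> R) : Prop :=
  forall w z, 0 < w -> T_rel P pi beta Rr Y u c w z (c w z).

Definition optimal_consumption (P : Z -> Z -> R) (pi : probability E R)
  (beta Rr Y : Z -> Z -> E -> R) (u : R -> Z -> R) (c : R -> Z -> R) : Prop :=
  inC u c /\ T_fixed P pi beta Rr Y u c.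

Definition nonneg_meas (f : Z -> Z -> E -> R) : Prop :=
  forall z zh, measurable_fun setT (f z zh) /\ (forall e, 0 <= f z zh e).

End Defs.


(* Let [g zh] be the supremum over wealth [a > 0] of the positive part of
   [u'(c2 a zh) - u'(c1 a zh)]; it is finite because [c1] and [c2] belong to
   the class C.  Where [u'(c2 w z) > u'(c1 w z)], agent 2 consumes less, so
   with the larger income its next-period wealth is larger; comparing the two
   Euler equations, and using that [c1] is increasing and [u'] decreasing,
   gives [g z <= \sum_zh K(1)_(z,zh) g zh].  Since [K(1) >= 0] has spectral
   radius below 1, [1 - K(1)] is a monotone matrix (continue from
   [t - K(1)] with [t] large, along which the resolvent stays bounded), so the
   subinvariant vector [g] vanishes: [u'(c2) <= u'(c1)], i.e. [c1 <= c2]. *)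

From HB Require Import structures.
From mathcomp Require Import all_boot all_order all_algebra.
From mathcomp Require Import complex.
From mathcomp Require Import all_classical all_reals all_analysis.
From mathcomp Require Import lra.
From mathcomp Require Import measurable_realfun.
Set Implicit Arguments.
Unset Strict Implicit.
Unset Printing Implicit Defensive.

Import Order.TTheory GRing.Theory Num.Theory.
Import numFieldNormedType.Exports.
Local Open Scope classical_set_scope.
Local Open Scope ring_scope.

Section MonotoneMatrices.
Variable R : realType.

Definition mx_monotone n (A : 'M[R]_n) :=
  forall y : 'cV[R]_n, (forall i, 0 <= (A *m y) i 0) -> forall i, 0 <= y i 0.

Lemma scalar_mxB_mulmxE n (K : 'M[R]_n) t (y : 'cV[R]_n) i :
  ((t%:M - K) *m y) i 0 = t * y i 0 - (K *m y) i 0.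
Proof. by rewrite mulmxBl mul_scalar_mx !mxE. Qed.

Lemma row_sum_mul_min n (M : 'M[R]_n) (y : 'cV[R]_n) i :
  (forall j, 0 <= M i j) -> (forall j, y i 0 <= y j 0) ->
  (\sum_j M i j) * y i 0 <= (M *m y) i 0.
Proof.
by move=> M0 ymin; rewrite mxE mulr_suml; apply: ler_sum => j _; rewrite ler_wpM2l.
Qed.

Lemma mx_monotone_min n (A : 'M[R]_n) :
  (forall y : 'cV[R]_n, (forall i, 0 <= (A *m y) i 0) ->
     forall i0, (forall j, y i0 0 <= y j 0) -> 0 <= y i0 0) ->
  mx_monotone A.
Proof.
move=> Hmin y Ay i.
case: (@arg_minP _ _ _ i predT (fun j => y j 0)) => // i0 _ ymin.
exact: le_trans (Hmin y Ay i0 (fun j => ymin j isT)) (ymin i isT).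
Qed.

Lemma mx_monotone_row_dominant n (K : 'M[R]_n) t :
  (forall i j, 0 <= K i j) -> (forall i, \sum_j K i j < t) ->
  mx_monotone (t%:M - K).
Proof.
move=> K0 Kt; apply: mx_monotone_min => y Ay i0 ymin.
have := Ay i0; rewrite scalar_mxB_mulmxE subr_ge0 => Kyt.
have := le_trans (row_sum_mul_min (K0 i0) ymin) Kyt.
by rewrite -subr_ge0 -mulrBl pmulr_rge0 // subr_gt0.
Qed.

Lemma invmx_ge0 n (A : 'M[R]_n) :
  mx_monotone A -> A \in unitmx -> forall i j, 0 <= invmx A i j.
Proof.
move=> Amon Au i j.
have : forall k, 0 <= (A *m (invmx A *m (delta_mx j 0 : 'cV_n))) k 0.
  by move=> k; rewrite mulmxA mulmxV // mul1mx mxE; case: (_ && _).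
by move/Amon => /(_ i); rewrite -colE mxE.
Qed.

(* With [B := invmx (t%:M - K) >= 0] and [x := ((t - h)%:M - K) *m y], one
   has [y = B x + h B y]; at a minimal entry of [y] this forces [y >= 0]. *)
Lemma mx_monotone_step n (K : 'M[R]_n) t h :
  mx_monotone (t%:M - K) -> (t%:M - K) \in unitmx -> 0 <= h ->
  (forall i, h * \sum_j invmx (t%:M - K) i j < 1) ->
  mx_monotone ((t - h)%:M - K).
Proof.
set A := t%:M - K; set B := invmx A => Amon Au h0 hB.
apply: mx_monotone_min => y Ay i0 ymin.
set x := ((t - h)%:M - K) *m y in Ay.
have Bx0 : 0 <= (B *m x) i0 0.
  by apply: Amon => k; rewrite mulmxA mulmxV // mul1mx; exact: Ay.
have Ay_x : A *m y = x + h *: y.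
  have -> : A = ((t - h)%:M - K) + h%:M.
    by apply/matrixP => a b; rewrite !mxE; case: (a == b); rewrite ?mulr1n ?mulr0n; lra.
  by rewrite mulmxDl mul_scalar_mx.
have yE : y i0 0 = (B *m x) i0 0 + h * (B *m y) i0 0.
  have yBE : y = B *m x + h *: (B *m y).
    by rewrite scalemxAr -mulmxDr -Ay_x mulmxA mulVmx // mul1mx.
  by rewrite {1}yBE mxE [in X in _ + X]mxE.
have : h * ((\sum_j B i0 j) * y i0 0) <= y i0 0.
  rewrite [leRHS]yE -[leLHS]add0r lerD // ler_wpM2l //.
  exact/row_sum_mul_min/ymin/invmx_ge0.
by rewrite mulrA -subr_ge0 -[X in X - _]mul1r -mulrBl pmulr_rge0 // subr_gt0.
Qed.

Lemma horner_char_poly_mx n (K : 'M[R]_n) t :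
  map_mx (horner_eval t) (char_poly_mx K) = t%:M - K.
Proof.
apply/matrixP => i j; rewrite !mxE /=.
by rewrite horner_evalE hornerD hornerN hornerMn hornerX hornerC.
Qed.

Lemma horner_char_poly n (K : 'M[R]_n) t : (char_poly K).[t] = \det (t%:M - K).
Proof. by rewrite -horner_char_poly_mx det_map_mx ?horner_evalE. Qed.

Lemma horner_adj_char_poly_mx n (K : 'M[R]_n) t i j :
  \adj (t%:M - K) i j = (\adj (char_poly_mx K) i j).[t].
Proof. by rewrite -horner_char_poly_mx -map_mx_adj mxE ?horner_evalE. Qed.

Lemma unitmx_scalar_mxB n (K : 'M[R]_n) t :
  ((t%:M - K) \in unitmx) = ~~ root (char_poly K) t.
Proof. by rewrite unitmxE unitfE -horner_char_poly. Qed.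

Lemma continuous_norm_horner (p : {poly R}) a b :
  {within `[a, b], continuous (fun x : R => `|p.[x]|)}.
Proof.
apply: continuous_subspaceT => x.
by apply: continuous_comp; [exact: continuous_horner | exact: norm_continuous].
Qed.

Lemma horner_bounded_itv (p : {poly R}) a b : a <= b ->
  exists C, forall t, a <= t <= b -> `|p.[t]| <= C.
Proof.
move=> ab; have [c _ Cmax] := EVT_max ab (@continuous_norm_horner p a b).
by exists `|p.[c]| => t t_ab; apply: Cmax; rewrite in_itv.
Qed.

Lemma horner_bounded_away_itv (p : {poly R}) a b : a <= b ->
  (forall t, a <= t <= b -> p.[t] != 0) ->
  exists2 e, 0 < e & forall t, a <= t <= b -> e <= `|p.[t]|.
Proof.
move=> ab p_neq0.
have [c c_ab Cmin] := EVT_min ab (@continuous_norm_horner p a b).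
exists `|p.[c]|; first by rewrite normr_gt0 p_neq0 // -in_itv.
by move=> t t_ab; apply: Cmin; rewrite in_itv.
Qed.

(* Cramer's rule writes the entries of [invmx (t%:M - K)] as quotients of
   polynomials in [t] whose denominator does not vanish on [a, b]. *)
Lemma invmx_row_sum_bounded n (K : 'M[R]_n) a b : a <= b ->
  (forall t, a <= t <= b -> ~~ root (char_poly K) t) ->
  exists C, forall t, a <= t <= b -> forall i, \sum_j invmx (t%:M - K) i j <= C.
Proof.
move=> ab no_root.
have [e e0 det_ge] := horner_bounded_away_itv ab no_root.
have /fin_all_exists [C adj_le] : forall ij : 'I_n * 'I_n, exists C,
    forall t, a <= t <= b -> `|(\adj (char_poly_mx K) ij.1 ij.2).[t]| <= C.
  by move=> ij; exact: horner_bounded_itv.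
set Cadj := \sum_ij `|C ij|.
exists (n%:R * (Cadj / e)) => t t_ab i.
rewrite -[n in n%:R]card_ord mulr_natl -sumr_const; apply: ler_sum => j _.
rewrite /invmx unitmx_scalar_mxB no_root // mxE (le_trans (ler_norm _)) //.
rewrite normrM normfV mulrC ler_pM ?invr_ge0 //.
  rewrite horner_adj_char_poly_mx (le_trans (adj_le (i, j) t t_ab)) //.
  rewrite (le_trans (ler_norm _)) // /Cadj (bigD1 (i, j)) //= lerDl.
  exact: sumr_ge0.
rewrite lef_pV2 ?posrE ?normr_gt0 -?horner_char_poly ?no_root //.
exact: det_ge.
Qed.

(* Lower [t] from [b] to [a] in steps short enough for [mx_monotone_step]. *)
Lemma mx_monotone_descent n (K : 'M[R]_n) a b : a <= b ->
  (forall t, a <= t <= b -> ~~ root (char_poly K) t) ->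
  mx_monotone (b%:M - K) -> mx_monotone (a%:M - K).
Proof.
move=> ab no_root monb.
have [C rowC] := invmx_row_sum_bounded ab no_root.
set N := (Num.truncn ((b - a) * C)).+1.
have N0 : 0 < N%:R :> R by rewrite ltr0n.
set h := (b - a) / N%:R.
have hN : h * N%:R = b - a by rewrite /h mulfVK // gt_eqF.
have h0 : 0 <= h by rewrite /h divr_ge0 ?subr_ge0.
have hC : h * C < 1 by rewrite /h mulrAC ltr_pdivrMr // mul1r truncnS_gt.
suff monk k : (k <= N)%N -> mx_monotone ((b - k%:R * h)%:M - K).
  by have := monk N (leqnn N); rewrite mulrC hN subKr.
elim: k => [_|k IHk ltkN]; first by rewrite mul0r subr0.
have kh : k%:R * h <= b - a by rewrite -hN mulrC ler_wpM2l // ler_nat ltnW.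
have t_ab : a <= b - k%:R * h <= b.
  by apply/andP; split; [lra | rewrite lerBlDr lerDl mulr_ge0].
rewrite -addn1 natrD mulrDl mul1r opprD addrA.
apply: mx_monotone_step => //.
- exact/IHk/ltnW.
- by rewrite unitmx_scalar_mxB no_root.
- by move=> i; apply: le_lt_trans hC; rewrite ler_wpM2l // rowC.
Qed.

(* [1%:M - K] is monotone, by descent from a diagonally dominant [t%:M - K];
   apply this to [- v]. *)
Lemma subinvariant_cV_eq0 n (K : 'M[R]_n) (v : 'cV[R]_n) :
  (forall i j, 0 <= K i j) -> (forall t, 1 <= t -> ~~ root (char_poly K) t) ->
  (forall i, 0 <= v i 0) -> (forall i, v i 0 <= (K *m v) i 0) -> v = 0.
Proof.
move=> K0 no_root v0 Kv.
set b := \sum_i \sum_j K i j + 1.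
have rowb i : \sum_j K i j < b.
  rewrite /b ltr_pwDr // [leRHS](bigD1 i) //= lerDl.
  by apply: sumr_ge0 => i' _; exact: sumr_ge0.
have b1 : 1 <= b by rewrite /b lerDr; apply: sumr_ge0 => i _; exact: sumr_ge0.
have mon1 : mx_monotone (1%:M - K).
  apply: (mx_monotone_descent b1); last exact: mx_monotone_row_dominant.
  by move=> t /andP[t1 _]; exact: no_root.
apply/matrixP => i j; rewrite (ord1 j) mxE.
have : 0 <= (- v) i 0.
  apply: mon1 => k; rewrite scalar_mxB_mulmxE mulmxN !mxE mul1r.
  by have := Kv k; rewrite mxE; lra.
by rewrite mxE; have := v0 i; lra.
Qed.

Lemma root_char_poly_le_spectral_radius n (K : 'M[R]_n) t :
  0 <= t -> root (char_poly K) t -> t <= spectral_radius K.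
Proof.
move=> t0 rt; rewrite /spectral_radius; set S := [set _ | _ in _].
have St : S t.
  exists (t%:C)%C; first by rewrite /= eigenvalue_root_char -map_char_poly fmorph_root.
  by rewrite normc_def /= expr0n /= addr0 sqrtr_sqr ger0_norm.
apply: sup_upper_bound => //; split; first by exists t.
have Re_ge0 (x : R[i]) : 0 <= complex.Re `|x| by rewrite normc_def sqrtr_ge0.
have [rs rsE] := closed_field_poly_normal (char_poly (map_mx (real_complex R) K)).
exists (\sum_(r <- rs) complex.Re `|r|) => _ [l /= + <-].
rewrite eigenvalue_root_char rsE (monicP (char_poly_monic _)) scale1r.
rewrite root_prod_XsubC; elim: rs {rsE} => // r rs IH.
rewrite in_cons big_cons => /orP[/eqP ->|/IH lrs].
  by rewrite lerDl sumr_ge0 // => x _; exact: Re_ge0.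
by rewrite (le_trans lrs) // lerDr Re_ge0.
Qed.

Lemma subinvariant_eq0 (Z : finType) (k : Z -> Z -> R) (v : Z -> R) :
  (forall z zh, 0 <= k z zh) -> (forall z, 0 <= v z) ->
  (forall z, v z <= \sum_zh k z zh * v zh) ->
  spectral_radius (\matrix_(i, j) k (enum_val i) (enum_val j) : 'M[R]_#|Z|) < 1 ->
  forall z, v z = 0.
Proof.
set K := \matrix_(i, j) _ => k0 v0 kv rK1 z.
set w : 'cV[R]_#|Z| := \col_i v (enum_val i).
have no_root t : 1 <= t -> ~~ root (char_poly K) t.
  move=> t1; apply/negP => /(root_char_poly_le_spectral_radius (le_trans ler01 t1)).
  lra.
suff /matrixP/(_ (enum_rank z) 0) : w = 0 by rewrite !mxE enum_rankK.
apply: subinvariant_cV_eq0 no_root _ _ => [i j|i|i]; rewrite ?mxE //.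
rewrite (le_trans (kv _)) // (reindex _ (onW_bij _ (enum_val_bij Z))) /=.
by apply: ler_sum => j _; rewrite !mxE.
Qed.

End MonotoneMatrices.

Section MarginalUtility.
Variables (R : realType) (Z : finType) (u : R -> Z -> R).
Hypothesis A1 : Assumption1 u.

Lemma up_gt0 z a : 0 < a -> 0 < up u a z.
Proof. by have [_ [up_pos _]] := A1 z; exact: up_pos. Qed.

Lemma up_continuous z a : 0 < a -> {for a, continuous (fun x => up u x z)}.
Proof.
move=> a0; have [/(_ a a0)[_ up_der] _] := A1 z.
by apply: differentiable_continuous; apply/derivable1_diffP.
Qed.

Lemma up_ltr z a b : 0 < a -> a < b -> up u b z < up u a z.
Proof.
move=> a0 ab; have [der [_ [upp_neg _]]] := A1 z.
set f := fun x => up u x z.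
have f_der x : x \in `]a, b[ -> is_derive x 1 f ('D_1 f x).
  by rewrite in_itv /= => /andP[ax _]; apply: derivableP; apply: (der x _).2; lra.
have f_cont : {within `[a, b], continuous f}.
  apply: derivable_within_continuous => x; rewrite in_itv /= => /andP[ax _].
  by apply: (der x _).2; lra.
have [c /[!in_itv]/= /andP[ac cb] fba] := MVT ab f_der f_cont.
have : 'D_1 f c < 0 by rewrite -derive1E; apply: upp_neg; lra.
by move=> Df_neg; rewrite -subr_lt0 fba pmulr_llt0 ?subr_gt0.
Qed.

Lemma up_ler z a b : 0 < a -> a <= b -> up u b z <= up u a z.
Proof. by move=> a0; rewrite le_eqVlt => /predU1P[-> //|ab]; exact/ltW/up_ltr. Qed.

Lemma up_ler_rev z a b : 0 < a -> up u a z <= up u b z -> b <= a.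
Proof. by move=> a0; apply: contraTT; rewrite -!ltNge; exact: up_ltr. Qed.

(* Marginal utility of consuming [c a zh] at wealth [a], with the value [+oo]
   of [T_rel] when [a] is not a feasible wealth. *)
Definition upEc (c : R -> Z -> R) zh (a : R) : \bar R :=
  if 0 < a then upE u (c a zh) zh else +oo%E.

Lemma upEc_ge0 c zh a : inC u c -> (0 <= upEc c zh a)%E.
Proof.
move=> [_ [_ [c_pos _]]]; rewrite /upEc /upE; case: ifP => // a0.
have /andP[c0 _] := c_pos zh a a0.
by rewrite c0 lee_fin ltW // up_gt0.
Qed.

Lemma measurable_upEc c zh : inC u c -> measurable_fun setT (upEc c zh).
Proof.
move=> [c_cont [_ [c_pos _]]]; apply: measurable_fun_if => //.
  by apply: measurable_fun_ltr => //; exact: measurable_cst.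
have -> : setT `&` ((fun a : R => 0 < a) @^-1` [set true]) = [set a | 0 < a].
  by apply/seteqP; split => x /=; [case|].
apply: (eq_measurable_fun (EFin \o (fun a => up u (c a zh) zh))).
  move=> a; rewrite inE /= => a0; rewrite /upE.
  by have /andP[-> _] := c_pos zh a a0.
apply/measurable_EFinP; apply: subspace_continuous_measurable_fun.
  have -> : [set a : R | 0 < a] = `]0, +oo[%classic.
    by apply/seteqP; split => x; rewrite /= in_itv /= andbT.
  exact: measurable_itv.
rewrite continuous_subspace_in => x; rewrite inE /= => x0.
have /andP[cx0 _] := c_pos zh x x0.
by apply: continuous_comp; [exact: c_cont | exact: up_continuous].
Qed.

End MarginalUtility.

Section EulerComparison.
Variables (R : realType) (Z : finType) (d : measure_display) (E : measurableType d).
Variables (P : Z -> Z -> R) (pi : probability E R) (beta Rr : Z -> Z -> E -> R).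
Variable u : R -> Z -> R.
Hypotheses (P_ge0 : forall z zh, 0 <= P z zh) (A1 : Assumption1 u).
Hypotheses (mbeta : nonneg_meas beta) (mRr : nonneg_meas Rr).

Lemma betaR_ge0 z zh e : 0 <= beta z zh e * Rr z zh e.
Proof. by rewrite mulr_ge0 //; [exact: (mbeta z zh).2 | exact: (mRr z zh).2]. Qed.

Lemma measurable_betaR z zh :
  measurable_fun setT (fun e => (beta z zh e * Rr z zh e)%:E).
Proof.
apply/measurable_EFinP.
by apply: measurable_funM; [exact: (mbeta z zh).1 | exact: (mRr z zh).1].
Qed.

Lemma integral_betaR_ge0 z zh : (0 <= \int[pi]_e (beta z zh e * Rr z zh e)%:E)%E.
Proof. by apply: integral_ge0 => e _; rewrite lee_fin betaR_ge0. Qed.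

Lemma K1E_ge0 z zh : (0 <= K1E P pi beta Rr z zh)%E.
Proof. by rewrite mule_ge0 ?lee_fin ?integral_betaR_ge0. Qed.

Lemma sum_K1E_mul_ge0 z (g : Z -> R) : (forall zh, 0 <= g zh) ->
  0 <= \sum_zh fine (K1E P pi beta Rr z zh) * g zh.
Proof. by move=> g0; apply: sumr_ge0 => zh _; rewrite mulr_ge0 ?fine_ge0 ?K1E_ge0. Qed.

Definition euler_integrand (Y : Z -> Z -> E -> R) (c : R -> Z -> R) z zh
    (w xi : R) (e : E) : \bar R :=
  ((beta z zh e * Rr z zh e)%:E *
    upEc u c zh (Rr z zh e * (w - xi) + Y z zh e))%E.

Lemma euler_integrand_ge0 Y c z zh w xi e :
  inC u c -> (0 <= euler_integrand Y c z zh w xi e)%E.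
Proof. by move=> Cc; rewrite mule_ge0 ?lee_fin ?betaR_ge0 ?upEc_ge0. Qed.

Lemma measurable_euler_integrand Y c z zh w xi : nonneg_meas Y -> inC u c ->
  measurable_fun setT (euler_integrand Y c z zh w xi).
Proof.
move=> mY Cc; apply: emeasurable_funM; first exact: measurable_betaR.
apply: measurableT_comp; first exact: measurable_upEc.
apply: measurable_funD; last exact: (mY z zh).1.
by apply: measurable_funM; [exact: (mRr z zh).1 | exact: measurable_cst].
Qed.

Lemma T_rel_Ez_le Y c w z xi : T_rel P pi beta Rr Y u c w z xi ->
  (Ez P pi z (fun zh => euler_integrand Y c z zh w xi) <= (up u xi z)%:E)%E.
Proof. by move=> [_ ->]; rewrite le_max lexx. Qed.

(* Away from the borrowing constraint the Euler equation holds with equality. *)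
Lemma T_rel_Ez_eq Y c w z xi : T_rel P pi beta Rr Y u c w z xi ->
  up u w z < up u xi z ->
  Ez P pi z (fun zh => euler_integrand Y c z zh w xi) = (up u xi z)%:E.
Proof.
move=> [_ upxiE] up_wxi; move: upxiE; rewrite /maxe.
by case: ifP => // _ [upE]; move: up_wxi; rewrite upE ltxx.
Qed.

Section TwoIncomes.
Variables (Y1 Y2 : Z -> Z -> E -> R) (c1 c2 : R -> Z -> R).
Hypotheses (mY1 : nonneg_meas Y1) (mY2 : nonneg_meas Y2).
Hypothesis Y12 : forall z zh e, Y1 z zh e <= Y2 z zh e.
Hypotheses (C1 : inC u c1) (C2 : inC u c2).

(* Consuming less leaves more wealth [a2 >= a1], and [c1] is increasing, so
   [u'(c2(a2)) <= u'(c1(a2)) + g <= u'(c1(a1)) + g]. *)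
Lemma euler_integrand_le_pointwise b r y1 y2 zh w x1 x2 g :
  0 <= b -> 0 <= r -> y1 <= y2 -> x2 <= x1 ->
  (forall a, 0 < a -> up u (c2 a zh) zh - up u (c1 a zh) zh <= g) ->
  (b%:E * upEc u c2 zh (r * (w - x2) + y2) <=
   b%:E * upEc u c1 zh (r * (w - x1) + y1) + g%:E * b%:E)%E.
Proof.
move=> b0 r0 y12 x21 gap_le.
have [_ [c1_incr [c1_pos _]]] := C1; have [_ [_ [c2_pos _]]] := C2.
set a1 := r * (w - x1) + y1; set a2 := r * (w - x2) + y2.
have a12 : a1 <= a2 by apply: lerD => //; apply: ler_wpM2l => //; lra.
have [<-|b_gt0] := eqVneq 0 b; first by rewrite !mul0e mule0 adde0.
have {}b_gt0 : 0 < b by rewrite lt_def eq_sym b_gt0.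
rewrite /upEc; case: (ltP 0 a1) => a1_gt0; last first.
  by rewrite gt0_muley ?lte_fin // addye ?leey.
have a2_gt0 : 0 < a2 by apply: lt_le_trans a12.
rewrite a2_gt0 /upE.
have /andP[c1_gt0 _] := c1_pos zh a1 a1_gt0.
have /andP[c2_gt0 _] := c2_pos zh a2 a2_gt0.
rewrite c1_gt0 c2_gt0 -!EFinM -EFinD lee_fin (mulrC g) -mulrDr ler_pM2l //.
have gap_a2 := gap_le a2 a2_gt0.
have := up_ler A1 zh c1_gt0 (c1_incr zh a1 a2 a1_gt0 a12); lra.
Qed.

Lemma euler_integral_le z zh w x1 x2 g :
  x2 <= x1 -> 0 <= g ->
  (forall a, 0 < a -> up u (c2 a zh) zh - up u (c1 a zh) zh <= g) ->
  (\int[pi]_e euler_integrand Y2 c2 z zh w x2 e <=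
   \int[pi]_e euler_integrand Y1 c1 z zh w x1 e +
   g%:E * \int[pi]_e (beta z zh e * Rr z zh e)%:E)%E.
Proof.
move=> x21 g0 gap_le.
have bR_ge0 e : [set: E] e -> (0 <= (beta z zh e * Rr z zh e)%:E)%E.
  by rewrite lee_fin betaR_ge0.
have gbR_ge0 e : [set: E] e -> (0 <= g%:E * (beta z zh e * Rr z zh e)%:E)%E.
  by rewrite mule_ge0 ?lee_fin ?betaR_ge0.
have mbR := measurable_betaR z zh.
have mgbR : measurable_fun setT (fun e => g%:E * (beta z zh e * Rr z zh e)%:E)%E.
  exact/emeasurable_funM/mbR/measurable_cst.
have mG1 := measurable_euler_integrand z zh w x1 mY1 C1.
have mG2 := measurable_euler_integrand z zh w x2 mY2 C2.
rewrite -ge0_integralZl_EFin // -ge0_integralD //; last first.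
  by move=> e _; exact: euler_integrand_ge0.
apply: ge0_le_integral => //; first by move=> e _; exact: euler_integrand_ge0.
- exact: emeasurable_funD.
move=> e _; apply: euler_integrand_le_pointwise => //; first exact: betaR_ge0.
exact: (mRr z zh).2.
Qed.

Lemma Ez_euler_le z w x1 x2 (g : Z -> R) :
  (forall zh, K1E P pi beta Rr z zh < +oo)%E -> x2 <= x1 -> (forall zh, 0 <= g zh) ->
  (forall a zh, 0 < a -> up u (c2 a zh) zh - up u (c1 a zh) zh <= g zh) ->
  (Ez P pi z (fun zh => euler_integrand Y2 c2 z zh w x2) <=
   Ez P pi z (fun zh => euler_integrand Y1 c1 z zh w x1) +
   (\sum_zh fine (K1E P pi beta Rr z zh) * g zh)%:E)%E.
Proof.
move=> K_fin x21 g0 gap_le.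
rewrite /Ez -sumEFin -big_split /=; apply: lee_sum => zh _.
have -> : (fine (K1E P pi beta Rr z zh) * g zh)%:E =
    ((P z zh)%:E * ((g zh)%:E * \int[pi]_e (beta z zh e * Rr z zh e)%:E))%E.
  have K_num : K1E P pi beta Rr z zh \is a fin_num by rewrite ge0_fin_numE ?K1E_ge0.
  rewrite muleCA -[X in (_ = X)%E]/((g zh)%:E * K1E P pi beta Rr z zh)%E.
  by rewrite -[in RHS](fineK K_num) -EFinM mulrC.
rewrite -ge0_muleDr ?mule_ge0 ?lee_fin ?integral_betaR_ge0 //; last first.
  by apply: integral_ge0 => e _; exact: euler_integrand_ge0.
apply: lee_wpmul2l; first by rewrite lee_fin.
exact: euler_integral_le x21 (g0 zh) (gap_le^~ zh).
Qed.

Lemma up_diff_le_sum_K1 (g : Z -> R) w z :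
  (forall zh, K1E P pi beta Rr z zh < +oo)%E ->
  T_fixed P pi beta Rr Y1 u c1 -> T_fixed P pi beta Rr Y2 u c2 ->
  (forall zh, 0 <= g zh) ->
  (forall a zh, 0 < a -> up u (c2 a zh) zh - up u (c1 a zh) zh <= g zh) ->
  0 < w ->
  up u (c2 w z) z - up u (c1 w z) z <= \sum_zh fine (K1E P pi beta Rr z zh) * g zh.
Proof.
move=> K_fin T1 T2 g0 gap_le w0.
set x1 := c1 w z; set x2 := c2 w z.
have [up12|up21] := lerP (up u x2 z - up u x1 z) 0.
  exact: le_trans up12 (sum_K1E_mul_ge0 z g0).
have [/andP[x1_gt0 x1_le] _] := T1 w z w0.
have x21 : x2 <= x1 by apply: (up_ler_rev A1 x1_gt0); lra.
have up_wx2 : up u w z < up u x2 z.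
  by have := up_ler A1 z x1_gt0 x1_le; lra.
have := @Ez_euler_le z w x1 x2 g K_fin x21 g0 gap_le.
rewrite (T_rel_Ez_eq (T2 w z w0) up_wx2).
move=> /le_trans/(_ (leeD2r _ (T_rel_Ez_le (T1 w z w0)))).
by rewrite -EFinD lee_fin; lra.
Qed.

End TwoIncomes.
End EulerComparison.

Section MarginalUtilityGap.
Variables (R : realType) (Z : finType) (u : R -> Z -> R) (c1 c2 : R -> Z -> R).
Hypotheses (C1 : inC u c1) (C2 : inC u c2).

Definition up_gap_set zh : set R :=
  [set Num.max 0 (up u (c2 a zh) zh - up u (c1 a zh) zh) | a in [set a | 0 < a]].

Definition up_gap zh : R := sup (up_gap_set zh).

Lemma has_sup_up_gap zh : has_sup (up_gap_set zh).
Proof.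
split.
  by exists (Num.max 0 (up u (c2 1 zh) zh - up u (c1 1 zh) zh)), 1 => //; exact: ltr01.
have [_ [_ [_ [M1 up_c1]]]] := C1; have [_ [_ [_ [M2 up_c2]]]] := C2.
exists (M1 + M2) => _ [a a0 <-].
have := up_c1 zh a a0; have := up_c2 zh a a0; rewrite !ler_norml ge_max.
move=> /andP[? ?] /andP[? ?]; apply/andP; split; lra.
Qed.

Lemma le_up_gap a zh :
  0 < a -> up u (c2 a zh) zh - up u (c1 a zh) zh <= up_gap zh.
Proof.
move=> a0; have := sup_upper_bound (has_sup_up_gap zh) (ex_intro2 _ _ a a0 erefl).
by apply: le_trans; rewrite le_max lexx orbT.
Qed.

Lemma up_gap_ge0 zh : 0 <= up_gap zh.
Proof.
have := sup_upper_bound (has_sup_up_gap zh) (ex_intro2 _ _ 1 ltr01 erefl).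
by apply: le_trans; rewrite le_max lexx.
Qed.

Lemma up_gap_le zh x : 0 <= x ->
  (forall a, 0 < a -> up u (c2 a zh) zh - up u (c1 a zh) zh <= x) -> up_gap zh <= x.
Proof.
move=> x0 gap_le; apply: ge_sup => [|_ [a a0 <-]]; first exact: (has_sup_up_gap zh).1.
by rewrite ge_max x0 gap_le.
Qed.

End MarginalUtilityGap.

Theorem proposition2p3 (R : realType) (Z : finType) (d : measure_display)
  (E : measurableType d) (P : Z -> Z -> R) (pi : probability E R)
  (beta Rr Y1 Y2 : Z -> Z -> E -> R) (u : R -> Z -> R)
  (c1 c2 : R -> Z -> R) :
  stochastic P ->
  nonneg_meas beta -> nonneg_meas Rr -> nonneg_meas Y1 -> nonneg_meas Y2 ->
  (forall z zh e, Y1 z zh e <= Y2 z zh e) ->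
  Assumption1 u ->
  Assumption2 P pi beta Rr Y1 u ->
  Assumption2 P pi beta Rr Y2 u ->
  optimal_consumption P pi beta Rr Y1 u c1 ->
  optimal_consumption P pi beta Rr Y2 u c2 ->
  forall (w : R) (z : Z), 0 < w -> c1 w z <= c2 w z.
Proof.
move=> [P_ge0 _] mbeta mRr mY1 mY2 Y12 A1 [_ [_ [K_fin rK1]]] _ [C1 T1] [C2 T2].
have gap0 : forall zh, up_gap u c1 c2 zh = 0.
  apply: (subinvariant_eq0 (k := fun z zh => fine (K1E P pi beta Rr z zh))) rK1.
  - by move=> z zh; rewrite fine_ge0 ?K1E_ge0.
  - exact: (up_gap_ge0 C1 C2).
  move=> z; apply: (up_gap_le C1 C2).
    by apply: sum_K1E_mul_ge0 => // zh; exact: (up_gap_ge0 C1 C2).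
  move=> a a0.
  apply: (up_diff_le_sum_K1 P_ge0 A1 mbeta mRr mY1 mY2 Y12 C1 C2 (K_fin z) T1 T2
            _ _ a0).
    exact: (up_gap_ge0 C1 C2).
  exact: (le_up_gap C1 C2).
move=> w z w0; have [_ [_ [/(_ z w w0)/andP[c2_gt0 _] _]]] := C2.
apply: (up_ler_rev A1 (z := z) c2_gt0).
by rewrite -subr_le0 (le_trans (le_up_gap C1 C2 z w0)) ?gap0.
Qed.
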